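(* Let $\mu,\psi,x>0$. If $$x>\frac{1}{2\sqrt2}-\frac{1+\sqrt2}{2\sqrt2}\,\frac{\log(2\psi\mu^2)}{\psi},$$ then $$e^{-\psi x}<\frac{\mu}{\sqrt{x+\frac12}}.$$ *)

From Stdlib Require Export Reals.

(* With [c = 1 + sqrt 2] the hypothesis reads [c ln(2 psi mu^2) > psi (1 - 2 sqrt 2 x)], and since
   [c - sqrt 2 = 1] this is exactly [ln(2 psi mu^2) + 2 psi x > y / c] for [y = 2 psi (x + 1/2)].
   As [c < e], the tangent-line bound [ln y < y / c] holds for every [y > 0], so
   [exp(-2 psi x) y < 2 psi mu^2], i.e. [exp(-psi x)^2 (x + 1/2) < mu^2]; take square roots. *)
From Stdlib Require Import Reals Lra Psatz.
Open Scope R_scope.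

Lemma sqrt2_lt_1415 : sqrt 2 < 1.415.
Proof.
  apply Rsqr_incrst_0; [| apply sqrt_pos | lra].
  rewrite Rsqr_sqrt by lra. unfold Rsqr. lra.
Qed.

Lemma one_plus_sqrt2_lt_exp1 : 1 + sqrt 2 < exp 1.
Proof.
  (* [e = (e^(1/4))^4 > (5/4)^4 > 2.44] *)
  assert (hsqrt2 := sqrt2_lt_1415).
  assert (hquarter : 1 + / 4 < exp (/ 4)) by (apply exp_ineq1; lra).
  assert (hsplit : exp 1 = exp (/ 4) * exp (/ 4) * (exp (/ 4) * exp (/ 4))).
  { rewrite <- !exp_plus. f_equal. lra. }
  assert (hhalf : 1.5625 < exp (/ 4) * exp (/ 4)) by nra.
  rewrite hsplit. nra.
Qed.

Lemma ln_lt_div (c y : R) : 0 < c -> c < exp 1 -> 0 < y -> ln y < y / c.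
Proof.
  intros hc hce hy.
  apply exp_lt_inv. rewrite exp_ln by exact hy.
  assert (hyc : 0 < y / c) by (apply Rdiv_lt_0_compat; assumption).
  assert (hsplit : exp (y / c) = exp (y / c - 1) * exp 1).
  { rewrite <- exp_plus. f_equal. ring. }
  assert (htangent := exp_ineq1_le (y / c - 1)).
  assert (hy_eq : y = y / c * c) by (field; lra).
  rewrite hsplit, hy_eq at 1. nra.
Qed.

Lemma hypothesis_rearranged (psi x L : R) : 0 < psi ->
  x > 1 / (2 * sqrt 2) - (1 + sqrt 2) / (2 * sqrt 2) * (L / psi) ->
  2 * psi * (x + 1 / 2) / (1 + sqrt 2) < L + 2 * psi * x.
Proof.
  intros hpsi h.
  assert (hs : 0 < sqrt 2) by (apply sqrt_lt_R0; lra).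
  assert (hcL : (1 + sqrt 2) * L > psi * (1 - 2 * sqrt 2 * x)).
  { apply Rmult_gt_reg_l with (/ (2 * sqrt 2 * psi)).
    - apply Rinv_0_lt_compat. nra.
    - replace (/ (2 * sqrt 2 * psi) * ((1 + sqrt 2) * L))
        with ((1 + sqrt 2) / (2 * sqrt 2) * (L / psi)) by (field; lra).
      replace (/ (2 * sqrt 2 * psi) * (psi * (1 - 2 * sqrt 2 * x)))
        with (1 / (2 * sqrt 2) - x) by (field; lra).
      lra. }
  apply Rmult_lt_reg_r with (1 + sqrt 2); [lra|].
  replace (2 * psi * (x + 1 / 2) / (1 + sqrt 2) * (1 + sqrt 2))
    with (2 * psi * (x + 1 / 2)) by (field; lra).
  nra.
Qed.

Lemma lt_div_sqrt_of_sqr_mul_lt (a b t : R) : 0 <= a -> 0 < b -> 0 < t ->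
  a ^ 2 * t < b ^ 2 -> a < b / sqrt t.
Proof.
  intros ha hb ht hlt.
  assert (hst : 0 < sqrt t) by (apply sqrt_lt_R0; exact ht).
  assert (hsqrt : sqrt (a ^ 2 * t) < sqrt (b ^ 2)).
  { apply sqrt_lt_1_alt. split; [nra | exact hlt]. }
  rewrite sqrt_mult, !sqrt_pow2 in hsqrt by nra.
  apply Rmult_lt_reg_r with (sqrt t); [exact hst|].
  replace (b / sqrt t * sqrt t) with b by (field; lra).
  exact hsqrt.
Qed.

Theorem mainTheorem19 (mu psi x : R) (hmu : 0 < mu) (hpsi : 0 < psi) (hx : 0 < x)
  (h : x > 1 / (2 * sqrt 2)
           - (1 + sqrt 2) / (2 * sqrt 2) * (ln (2 * psi * mu ^ 2) / psi)) :
  exp (- psi * x) < mu / sqrt (x + 1 / 2).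
Proof.
  set (y := 2 * psi * (x + 1 / 2)).
  set (m := 2 * psi * mu ^ 2).
  assert (hy : 0 < y) by (unfold y; nra).
  assert (hm : 0 < m) by (unfold m; pose proof (pow_lt mu 2 hmu); nra).
  assert (hln : ln y < ln m + 2 * psi * x).
  { apply Rlt_trans with (y / (1 + sqrt 2)).
    - apply ln_lt_div; [pose proof (sqrt_pos 2); lra | exact one_plus_sqrt2_lt_exp1 | exact hy].
    - exact (hypothesis_rearranged psi x (ln m) hpsi h). }
  assert (hexp : exp (- psi * x) ^ 2 * y < m).
  { replace (exp (- psi * x) ^ 2 * y) with (exp (ln y - 2 * psi * x)).
    - rewrite <- (exp_ln m) by exact hm. apply exp_increasing. lra.
    - unfold Rminus. rewrite exp_plus, exp_ln by exact hy.
      replace (- (2 * psi * x)) with (- psi * x + - psi * x) by ring.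
      rewrite exp_plus. ring. }
  apply lt_div_sqrt_of_sqr_mul_lt; [left; apply exp_pos | exact hmu | lra |].
  unfold y, m in hexp. nra.
Qed.
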